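(* Let $\Sigma$ be a finite set of primes, $k$ a positive integer, and $a_1,\ldots,a_k,b_1,\ldots,b_k\in\mathbb{Z}$ with $a_i\neq0$, $\gcd(a_i,b_i)=1$, $a_ib_j-a_jb_i\neq0$ ($i<j$), such that $(2k)!\prod_i a_i\prod_{i<j}(a_ib_j-a_jb_i)$ is a $\Sigma$-unit. Let $M=\max\{|a_1|,\ldots,|a_k|,|b_1|,\ldots,|b_k|\}$. Then for real $x\ge z\ge2$, the set $\Omega(x,z)$ has at most $$kM\frac{x+1}{z-1}+k\sqrt{Mx+M}$$ elements $n$ such that $L_i(n)$ is not $\Sigma$-square-free for some $i\in\{1,\ldots,k\}$.
   Context: An integer is a $\Sigma$-unit if all its prime divisors lie in $\Sigma$; it is $\Sigma$-square-free if it is a product of a $\Sigma$-unit and a square-free integer. $P_\Sigma(z)=\prod_{p<z,\,p\notin\Sigma}p$. $L_i(n)=a_in+b_i$. $\Omega(x,z)=\{n\in\mathbb{Z}:1\le n\le x,\ \gcd(L_1(n)\cdots L_k(n),P_\Sigma(z))=1\}$. *)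

From HB Require Import structures.
From mathcomp Require Import all_boot all_order all_algebra.
From mathcomp Require Import boolp reals.
Set Implicit Arguments. Unset Strict Implicit. Unset Printing Implicit Defensive.
Import Order.TTheory GRing.Theory Num.Theory.
Local Open Scope ring_scope.

(* Sigma is a finite set of primes, represented as a finite list of naturals
   all of which are prime (hypothesis in the theorem). *)

Definition Sigma_unit (Sigma : seq nat) (m : int) : Prop :=
  forall p : nat, prime p -> (p %| `|m|)%N -> p \in Sigma.

Definition squarefree_int (s : int) : Prop :=
  s != 0 /\ forall p : nat, prime p -> ~~ (p ^ 2 %| `|s|)%N.

Definition Sigma_squarefree (Sigma : seq nat) (m : int) : Prop :=
  exists u s : int, m = u * s /\ Sigma_unit Sigma u /\ squarefree_int s.

Definition P_Sigma {R : realType} (Sigma : seq nat) (z : R) : nat :=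
  \prod_(p <- iota 0 (Num.truncn z).+1 | prime p && (p \notin Sigma) && (p%:R < z)) p.

Definition L {k : nat} (a b : 'I_k -> int) (i : 'I_k) (n : int) : int :=
  a i * n + b i.

Definition in_Omega {R : realType} (Sigma : seq nat) (k : nat) (a b : 'I_k -> int)
    (x z : R) (n : int) : Prop :=
  1 <= n /\ n%:~R <= x /\
  gcdz (\prod_(i < k) L a b i n) (P_Sigma Sigma z)%:Z = 1.

(* Number of n in Omega(x,z) such that some L_i(n) is not Sigma-square-free.
   Every element of Omega(x,z) is a natural number in [1, floor x], so it
   suffices to count over 0 .. truncn x. *)
Definition bad_count {R : realType} (Sigma : seq nat) (k : nat) (a b : 'I_k -> int)
    (x z : R) : nat :=
  count (fun n : nat => `[< in_Omega Sigma a b x z n%:Z /\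
                            exists i : 'I_k, ~ Sigma_squarefree Sigma (L a b i n%:Z) >])
        (iota 0 (Num.truncn x).+1).

From HB Require Import structures.
From mathcomp Require Import all_boot all_order all_algebra.
From mathcomp Require Import boolp reals zify ring lra.
Set Implicit Arguments. Unset Strict Implicit. Unset Printing Implicit Defensive.
Import Order.TTheory GRing.Theory Num.Theory.
Local Open Scope ring_scope.

Lemma count_leq_size_inj (T U : eqType) (P : pred T) (s : seq T) (g : T -> U)
    (t : seq U) :
  uniq s -> {in filter P s &, injective g} ->
  {in s, forall n, P n -> g n \in t} -> (count P s <= size t)%N.
Proof.
move=> s_uniq g_inj g_t; rewrite -size_filter -(size_map g).
apply: uniq_leq_size; first by rewrite map_inj_in_uniq ?filter_uniq.
by move=> y /mapP[n]; rewrite mem_filter => /andP[Pn sn] ->; apply: g_t.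
Qed.

Lemma count_has_leq_sum (I T : Type) (P : I -> pred T) (js : seq I) (s : seq T) :
  (count (fun n => has (P^~ n) js) s <= \sum_(j <- js) count (P j) s)%N.
Proof.
elim: js => [|j js IHjs] /=; first by rewrite big_nil count_pred0.
rewrite big_cons (leq_trans _ (leq_add (leqnn _) IHjs)) //.
by rewrite -count_predUI leq_addr.
Qed.

Lemma count_affine_root (a b : int) (s : seq nat) : a != 0 -> uniq s ->
  (count (fun n : nat => (a * n%:Z + b == 0)%R) s <= 1)%N.
Proof.
move=> a_neq0 s_uniq.
apply: (@count_leq_size_inj _ _ _ _ (fun=> tt) [:: tt]) => // n1 n2.
rewrite !mem_filter => /andP[/eqP root1 _] /andP[/eqP root2 _] _.
have : a * n1%:Z = a * n2%:Z by apply: (addIr b); rewrite root1 root2.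
by move/(mulfI a_neq0) => [].
Qed.

Lemma affine_dvd_eqmod (a b : int) (q n1 n2 : nat) : coprime q `|a| ->
  (q %| `|(a * n1%:Z + b)%R|)%N -> (q %| `|(a * n2%:Z + b)%R|)%N -> n1 = n2 %[mod q].
Proof.
move=> coprime_qa dvd1 dvd2.
have : (q%:Z %| (a * n1%:Z + b) - (a * n2%:Z + b))%Z.
  by apply: rpredB; rewrite dvdzE absz_nat.
rewrite (_ : _ - _ = a * (n1%:Z - n2%:Z)); last by ring.
by rewrite (@Gauss_dvdzr q%:Z a _ coprime_qa) -eqz_mod_dvd !modz_nat => /eqP[].
Qed.

Lemma count_affine_dvd (a b : int) (q N : nat) : (0 < q)%N -> coprime q `|a| ->
  (count (fun n : nat => q %| `|(a * n%:Z + b)%R|)%N (iota 0 N.+1) <= N %/ q + 1)%N.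
Proof.
move=> q_gt0 coprime_qa; rewrite addn1 -[X in (_ <= X)%N](size_iota 0).
apply: (@count_leq_size_inj _ _ _ _ (fun n => n %/ q)%N) (iota_uniq _ _) _ _.
  move=> n1 n2; rewrite !mem_filter => /andP[dvd1 _] /andP[dvd2 _] eq_div.
  by rewrite (divn_eq n1 q) (divn_eq n2 q) eq_div (affine_dvd_eqmod coprime_qa dvd1 dvd2).
by move=> n; rewrite !mem_iota !add0n !ltnS => /andP[_ le_nN] _; apply: leq_div2r.
Qed.

Lemma absz_affine_leq (a b : int) (n M : nat) : (`|a| <= M)%N -> (`|b| <= M)%N ->
  (`|(a * n%:Z + b)%R| <= M * n + M)%N.
Proof.
move=> le_aM le_bM; rewrite -lez_nat abszE PoszD PoszM.
apply: le_trans (ler_normD _ _) _; rewrite normrM.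
by apply: lerD; [apply: ler_wpM2r|]; rewrite // -abszE lez_nat.
Qed.

(* Telescoping: [m^-2 <= (m - 1)^-1 - m^-1]. *)
Lemma inv_sqr_add_inv_le (R : realFieldType) (m : R) :
  2 <= m -> (m ^+ 2)^-1 + m^-1 <= (m - 1)^-1.
Proof.
move=> m_ge2; have m_neq0 : m != 0 by apply/eqP=> m0; rewrite m0 in m_ge2; lra.
have m1_neq0 : m - 1 != 0 by apply/eqP=> m1; lra.
rewrite -subr_ge0 (_ : _ - _ = (m ^+ 2 * (m - 1))^-1); last by field; rewrite m_neq0 m1_neq0.
by rewrite invr_ge0 mulr_ge0 ?sqr_ge0 // subr_ge0; lra.
Qed.

Lemma sum_inv_sqr_iota_le (R : realFieldType) (P : pred nat) (m len : nat) :
  (2 <= m)%N -> \sum_(p <- iota m len | P p) (p%:R ^+ 2)^-1 <= (m%:R - 1 : R)^-1.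
Proof.
elim: len m => [|len IHlen] m m_ge2.
  by rewrite big_nil invr_ge0 subr_ge0 ler1n; lia.
have m_ge2R : (2 : R) <= m%:R by rewrite (ler_nat R 2 m).
have := IHlen m.+1 (leqW m_ge2); rewrite -natr1 addrK => IH.
rewrite /= big_cons; case: (P m).
  by rewrite (le_trans _ (inv_sqr_add_inv_le m_ge2R)) // lerD2l.
by apply: le_trans IH _; rewrite lef_pV2 ?posrE; lra.
Qed.

Lemma sum_inv_sqr_ge_le (R : realFieldType) (P : pred nat) (z : R) (m len : nat) :
  1 < z -> (forall p, P p -> z <= p%:R) ->
  \sum_(p <- iota m len | P p) (p%:R ^+ 2)^-1 <= (z - 1)^-1.
Proof.
move=> z_gt1 P_ge; elim: len m => [|len IHlen] m.
  by rewrite big_nil invr_ge0; lra.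
case Pm: (P m); last by rewrite /= big_cons Pm.
have z_le_m := P_ge _ Pm.
have m_ge2 : (2 <= m)%N by rewrite -(ltr_nat R); lra.
apply: le_trans (sum_inv_sqr_iota_le R P len.+1 m_ge2) _.
by rewrite lef_pV2 ?posrE; lra.
Qed.

Lemma Sigma_unit_dvd (Sigma : seq nat) (d m : int) :
  (d %| m)%Z -> Sigma_unit Sigma m -> Sigma_unit Sigma d.
Proof. by rewrite dvdzE => dvd_dm unit_m p p_pr /dvdn_trans/(_ dvd_dm); apply: unit_m. Qed.

Lemma Sigma_unit_coprime (Sigma : seq nat) (m : int) (p e : nat) :
  Sigma_unit Sigma m -> prime p -> p \notin Sigma -> coprime (p ^ e) `|m|.
Proof.
move=> unit_m p_pr p_Sigma; apply: coprimeXl; rewrite prime_coprime //.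
by apply: contra p_Sigma; apply: unit_m.
Qed.

(* The Sigma-part of [m] is a Sigma-unit; the rest is square-free. *)
Lemma Sigma_squarefree_of_sqr_ndvd (Sigma : seq nat) (m : int) : m != 0 ->
  (forall p, prime p -> p \notin Sigma -> ~~ (p ^ 2 %| `|m|)%N) ->
  Sigma_squarefree Sigma m.
Proof.
move=> m_neq0 sqr_ndvd.
pose pi : nat_pred := [pred p | p \in Sigma].
have m_gt0 : (0 < `|m|)%N by rewrite absz_gt0.
have mem_part (pi' : nat_pred) p : prime p -> (p %| `|m|`_pi')%N -> p \in pi'.
  by move=> p_pr p_dvd; apply: (pnatPpi (part_pnat pi' `|m|)); rewrite mem_primes p_pr part_gt0.
exists ((-1) ^+ (m < 0)%R * (`|m|`_pi)%:Z), (`|m|`_pi^')%:Z; split; [|split].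
- by rewrite -mulrA -PoszM partnC // {1}[m]intEsign.
- by move=> p p_pr; rewrite abszMsign absz_nat => /(mem_part _ _ p_pr).
split; first by rewrite -lt0n part_gt0.
move=> p p_pr; rewrite absz_nat; apply/negP => sqr_dvd.
case: (boolP (p \in Sigma)) => [p_Sigma | p_nSigma].
  have /(mem_part _ _ p_pr) : (p %| `|m|`_pi^')%N.
    by apply: dvdn_trans sqr_dvd; rewrite dvdn_exp.
  by rewrite !inE /= p_Sigma.
by move: (sqr_ndvd p p_pr p_nSigma); rewrite (dvdn_trans sqr_dvd (dvdn_part _ _)).
Qed.

Lemma in_Omega_prime_ge (R : realType) (Sigma : seq nat) (k : nat)
    (a b : 'I_k -> int) (x z : R) (n : int) (i : 'I_k) (p : nat) :
  in_Omega Sigma a b x z n -> prime p -> p \notin Sigma ->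
  (p %| `|L a b i n|)%N -> z <= p%:R.
Proof.
move=> [_ [_ gcd_eq1]] p_pr p_Sigma p_dvd; rewrite leNgt; apply/negP => p_lt_z.
have z_ge0 : 0 <= z by apply: ltW (le_lt_trans (ler0n _ p) p_lt_z).
have p_dvdP : (p %| P_Sigma Sigma z)%N.
  rewrite /P_Sigma (big_rem p); last by rewrite mem_iota add0n ltnS truncn_ge_nat // ltW.
  by rewrite p_pr p_Sigma p_lt_z dvdn_mulr.
have p_dvd_prod : (p %| `|(\prod_(j < k) L a b j n)%R|)%N.
  by rewrite (bigD1 i) //= abszM dvdn_mulr.
have : (p%:Z %| gcdz (\prod_(j < k) L a b j n) (P_Sigma Sigma z)%:Z)%Z.
  by rewrite dvdz_gcd !dvdzE !absz_nat p_dvd_prod p_dvdP.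
by rewrite gcd_eq1 dvdzE absz_nat dvdn1 => /eqP p_eq1; rewrite p_eq1 in p_pr.
Qed.

Definition sieve_primes {R : realType} (Sigma : seq nat) (z : R) (T : nat) : seq nat :=
  [seq p <- iota 2 T.-1 | prime p && (p \notin Sigma) && (z <= p%:R)].

Lemma mem_sieve_primes (R : realType) (Sigma : seq nat) (z : R) (T p : nat) :
  (p \in sieve_primes Sigma z T) = [&& prime p, p \notin Sigma, z <= p%:R & (p <= T)%N].
Proof.
rewrite mem_filter mem_iota -!andbA; case: (boolP (prime p)) => //= /prime_gt1 p_gt1.
by have -> : ((2 <= p) && (p < 2 + T.-1))%N = (p <= T)%N by apply/idP/idP; lia.
Qed.

Lemma sieve_primes_sum_le (R : realType) (Sigma : seq nat) (z x : R) (N T : nat) :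
  1 < z -> N%:R <= x -> (0 < T)%N ->
  (1 + \sum_(p <- sieve_primes Sigma z T) (N %/ p ^ 2 + 1))%:R <= x / (z - 1) + T%:R.
Proof.
move=> z_gt1 le_Nx T_gt0; have x_ge0 : 0 <= x by apply: le_trans le_Nx.
have sum_le : \sum_(p <- sieve_primes Sigma z T) (p%:R ^+ 2)^-1 <= (z - 1)^-1 :> R.
  by rewrite big_filter; apply: sum_inv_sqr_ge_le => // p /andP[_ ->].
rewrite big_split /= sum1_size addnCA natrD; apply: lerD.
  apply: le_trans (ler_wpM2l x_ge0 sum_le); rewrite natr_sum mulr_sumr.
  rewrite !big_seq; apply: ler_sum => p; rewrite mem_sieve_primes => /and4P[p_pr _ _ _].
  have sqr_gt0 : (0 : R) < p%:R ^+ 2 by rewrite exprn_gt0 // ltr0n prime_gt0.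
  rewrite -div1r mulrA mulr1 ler_pdivlMr // -natrX -natrM; apply: le_trans le_Nx.
  by rewrite ler_nat leq_divM.
rewrite ler_nat size_filter (leq_trans (leq_add (leqnn 1) (count_size _ _))) //.
by rewrite size_iota; lia.
Qed.

Section BadCount.

Variables (R : realType) (Sigma : seq nat) (k : nat) (a b : 'I_k -> int) (x z : R).
Variable M : nat.
Hypotheses (le_aM : forall i, (`|a i| <= M)%N) (le_bM : forall i, (`|b i| <= M)%N).

Local Notation large_primes :=
  (sieve_primes Sigma z (Num.truncn (Num.sqrt (M%:R * x + M%:R)))).
Local Notation root_of i := (fun n : nat => (a i * n%:Z + b i == 0)%R).
Local Notation sqr_dvd i p := (fun n : nat => p ^ 2 %| `|(a i * n%:Z + b i)%R|)%N.

Lemma bad_witness (n : nat) : in_Omega Sigma a b x z n%:Z ->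
    (exists i, ~ Sigma_squarefree Sigma (L a b i n%:Z)) ->
  has (fun i => root_of i n || has (fun p => sqr_dvd i p n) large_primes) (index_enum 'I_k).
Proof.
move=> n_Omega [i not_sqfree]; have [_ [le_nx _]] := n_Omega.
apply/hasP; exists i; first exact: mem_index_enum.
case: (boolP (a i * n%:Z + b i == 0)) => //= L_neq0.
have [p [p_pr [p_Sigma p_sqr_dvd]]] :
    exists p, [/\ prime p, p \notin Sigma & (p ^ 2 %| `|L a b i n%:Z|)%N].
  apply: contrapT => no_p; apply/not_sqfree/Sigma_squarefree_of_sqr_ndvd => // p p_pr p_Sigma.
  by apply/negP => p_sqr_dvd; apply: no_p; exists p.
apply/hasP; exists p => //; rewrite mem_sieve_primes p_pr p_Sigma /=; apply/andP; split.
  by apply: in_Omega_prime_ge n_Omega p_pr p_Sigma (dvdn_trans _ p_sqr_dvd); rewrite expnS dvdn_mulr.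
have sqr_le_y : p%:R ^+ 2 <= M%:R * x + M%:R :> R.
  have := leq_trans (dvdn_leq _ p_sqr_dvd) (absz_affine_leq n (le_aM i) (le_bM i)).
  rewrite absz_gt0 L_neq0 => /(_ isT) sqr_le; rewrite -natrX.
  apply: le_trans (_ : (M * n + M)%:R <= _); first by rewrite ler_nat.
  by rewrite natrD natrM lerD2r ler_wpM2l.
rewrite truncn_ge_nat ?sqrtr_ge0 // -(ger0_norm (ler0n R p)) -sqrtr_sqr ler_sqrt //.
exact: le_trans (sqr_ge0 _) sqr_le_y.
Qed.

Lemma bad_count_leq_sum :
  (bad_count Sigma a b x z <= \sum_(i < k)
     (count (root_of i) (iota 0 (Num.truncn x).+1) +
      \sum_(p <- large_primes) count (sqr_dvd i p) (iota 0 (Num.truncn x).+1)))%N.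
Proof.
pose bad_at i n := root_of i n || has (fun p => sqr_dvd i p n) large_primes.
apply: (@leq_trans (count (fun n => has (bad_at^~ n) (index_enum 'I_k))
                          (iota 0 (Num.truncn x).+1))).
  by apply: sub_count => n /asboolP[]; apply: bad_witness.
apply: leq_trans (count_has_leq_sum _ _ _) _; apply: leq_sum => i _.
apply: (leq_trans _ (leq_add (leqnn _) (count_has_leq_sum (fun p n => sqr_dvd i p n) _ _))).
by rewrite -count_predUI leq_addr.
Qed.

End BadCount.

Theorem proposition3p5 (R : realType) (Sigma : seq nat) (k : nat)
    (a b : 'I_k -> int) (x z : R) :
  all prime Sigma ->
  (0 < k)%N ->
  (forall i, a i != 0) ->
  (forall i, gcdz (a i) (b i) = 1) ->
  (forall i j : 'I_k, (i < j)%N -> a i * b j - a j * b i != 0) ->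
  Sigma_unit Sigma
    ((2 * k)`!%:Z * (\prod_(i < k) a i) *
     \prod_(i < k) \prod_(j < k | (i < j)%N) (a i * b j - a j * b i)) ->
  2 <= z -> z <= x ->
  let M : nat := \max_(i < k) maxn `|a i|%N `|b i|%N in
  (bad_count Sigma a b x z)%:R <=
    k%:R * M%:R * ((x + 1) / (z - 1)) + k%:R * Num.sqrt (M%:R * x + M%:R).
Proof.
move=> _ k_gt0 a_neq0 _ _ unit_prod z_ge2 z_le_x /=; set M := \max_(i < k) _.
have le_maxM i : (maxn `|a i| `|b i| <= M)%N.
  exact: (@leq_bigmax _ (fun i => maxn `|a i|%N `|b i|%N) i).
have le_aM i : (`|a i| <= M)%N by apply: leq_trans (le_maxM i); apply: leq_maxl.
have le_bM i : (`|b i| <= M)%N by apply: leq_trans (le_maxM i); apply: leq_maxr.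
have M_ge1 : (1 <= M)%N by apply: leq_trans (le_aM (Ordinal k_gt0)); rewrite absz_gt0.
have x_ge0 : 0 <= x by lra.
have M_ge1R : 1 <= M%:R :> R by rewrite ler1n.
have y_ge1 : 1 <= M%:R * x + M%:R :> R by nra.
pose T := Num.truncn (Num.sqrt (M%:R * x + M%:R)).
have T_gt0 : (0 < T)%N.
  by rewrite /T truncn_ge_nat ?sqrtr_ge0 // -[X in X <= _](sqrtr1 R) ler_sqrt // (le_trans ler01).
have coprime_a i p : prime p -> p \notin Sigma -> coprime (p ^ 2) `|a i|.
  apply: Sigma_unit_coprime; apply: Sigma_unit_dvd unit_prod.
  by rewrite dvdzE !abszM (bigD1 i) //= abszM dvdn_mulr // dvdn_mull // dvdn_mulr.
apply: le_trans (_ : (k * (1 + \sum_(p <- sieve_primes Sigma z T)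
                                    (Num.truncn x %/ p ^ 2 + 1)))%:R <= _).
  rewrite ler_nat (leq_trans (bad_count_leq_sum Sigma x z le_aM le_bM)) //.
  rewrite -[k in (_ <= k * _)%N]card_ord -sum_nat_const; apply: leq_sum => i _.
  apply: leq_add; first exact: count_affine_root (a_neq0 i) (iota_uniq _ _).
  rewrite !big_seq; apply: leq_sum => p; rewrite mem_sieve_primes => /and4P[p_pr p_Sigma _ _].
  by apply: count_affine_dvd; [rewrite expn_gt0 prime_gt0 | exact: coprime_a].
have z_gt1 : 1 < z by lra.
have trunc_x_le : (Num.truncn x)%:R <= x by rewrite truncn_le.
rewrite natrM -mulrA -mulrDr ler_wpM2l //.
apply: le_trans (sieve_primes_sum_le Sigma z_gt1 trunc_x_le T_gt0) _.
apply: lerD; last by rewrite truncn_le sqrtr_ge0.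
by rewrite mulrA ler_wpM2r ?invr_ge0 ?subr_ge0 //; nra.
Qed.
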